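(* There is no Michael space if and only if every $K$-Lusin space is productively Lindelöf.
   Context: All spaces are completely regular. A Michael space is a Lindelöf space $Y$ such that $Y\times\mathbb{P}$ is not Lindelöf, where $\mathbb{P}$ is the space of irrationals. A space is $K$-Lusin if it is an injective continuous image of a Lindelöf Čech-complete space. $X$ is productively Lindelöf if $X\times Y$ is Lindelöf for every Lindelöf space $Y$. *)

From HB Require Import structures.
From mathcomp Require Import all_boot all_order all_algebra.
From mathcomp Require Import all_classical all_reals all_analysis.
From mathcomp Require Import Rstruct Rstruct_topology borel_hierarchy.
Set Implicit Arguments. Unset Strict Implicit. Unset Printing Implicit Defensive.
Import Order.TTheory GRing.Theory Num.Theory.
Local Open Scope classical_set_scope.

Definition tychonoff_space (X : topologicalType) : Prop :=
  completely_regular_space X /\ hausdorff_space X.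

Definition lindelof (X : topologicalType) : Prop :=
  forall (I : Type) (U : I -> set X),
    (forall i, open (U i)) -> setT `<=` \bigcup_(i in setT) U i ->
    exists J : set I, countable J /\ setT `<=` \bigcup_(i in J) U i.

Definition irrationals : topologicalType :=
  set_type (@irrational Rdefinitions.R).

Definition embedding (X K : topologicalType) (f : X -> K) : Prop :=
  continuous f /\ injective f /\
  forall U : set X, open U -> exists V : set K, open V /\ f @` U = range f `&` V.

(* Čech-complete: a Tychonoff space which is a G_delta in some (equivalently,
   every) Hausdorff compactification of it. *)
Definition cech_complete (X : topologicalType) : Prop :=
  tychonoff_space X /\
  exists (K : topologicalType) (f : X -> K),
    compact [set: K] /\ hausdorff_space K /\ embedding f /\
    dense (range f) /\ Gdelta (range f).

Definition K_Lusin (X : topologicalType) : Prop :=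
  exists (Z : topologicalType) (f : Z -> X),
    tychonoff_space Z /\ lindelof Z /\ cech_complete Z /\
    continuous f /\ injective f /\ (forall x : X, exists z : Z, f z = x).

Definition michael_space (Y : topologicalType) : Prop :=
  tychonoff_space Y /\ lindelof Y /\ ~ lindelof (Y * irrationals)%type.

Definition productively_lindelof (X : topologicalType) : Prop :=
  forall Y : topologicalType, tychonoff_space Y -> lindelof Y -> lindelof (X * Y)%type.

(* Right to left: the irrationals P are Lindelöf and Čech-complete, hence
   K-Lusin, so P × Y is Lindelöf for every Lindelöf Y.
   Left to right: let X be a continuous bijective image of a Lindelöf space Z
   which is a G_delta ⋂ₙ Gₙ in a compactification K, and let Y be Lindelöf; it
   suffices that Z × Y is Lindelöf, and P × Y is Lindelöf because Y is not a
   Michael space. Each Gₙ contains an increasing sequence of closed sets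
   Wₙ(j) whose union covers Z. The continued-fraction digits dₘ : P → ℕ are
   locally constant, and every k : ℕ → ℕ is dominated by the digits of some
   irrational; the compact set C(x) = ⋂ₘ Wₘ(dₘ x) lies inside Z. Given an open
   cover of Z × Y, finitely many boxes cover C(x) × {y}, and by compactness some
   finite stage ⋂_{m<n} Wₘ(dₘ x) already lies in their union; as the first n
   digits are locally constant, this yields a neighbourhood of (x, y) in P × Y
   controlled by finitely many members of the cover. Countably many of these
   neighbourhoods cover P × Y, and domination shows that the corresponding
   countably many members cover Z × Y. *)

From HB Require Import structures.
From mathcomp Require Import all_boot all_order all_algebra.
From mathcomp Require Import all_classical all_reals all_analysis.
From mathcomp Require Import Rstruct Rstruct_topology borel_hierarchy unstable finmap.
From mathcomp Require Import lra zify ring.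
Set Implicit Arguments. Unset Strict Implicit. Unset Printing Implicit Defensive.
Import Order.TTheory GRing.Theory Num.Theory.
Import numFieldNormedType.Exports.
Local Open Scope classical_set_scope.

(** * Lindelöf products *)

Lemma lindelof_surjective_image (A B : topologicalType) (h : A -> B) :
  continuous h -> (forall b, exists a, h a = b) -> lindelof A -> lindelof B.
Proof.
move=> ch sh lA Ix U oU cU.
have oV i : open (h @^-1` U i) by apply: open_comp => // x _; exact: ch.
have [|J [cJ JU]] := lA Ix (fun i => h @^-1` U i) oV.
  by move=> a _; have [i _ Ui] := cU (h a) I; exists i.
exists J; split => // b _; have [a <-] := sh b.
by have [i Ji Ui] := JU a I; exists i.
Qed.

Lemma lindelof_prodC (A B : topologicalType) :
  lindelof (A * B)%type -> lindelof (B * A)%type.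
Proof.
apply: lindelof_surjective_image (@swap A B) _ _; first exact: swap_continuous.
by case=> b a; exists (a, b).
Qed.

Lemma lindelof_prod_image (Z X Y : topologicalType) (f : Z -> X) :
  continuous f -> (forall x, exists z, f z = x) ->
  lindelof (Z * Y)%type -> lindelof (X * Y)%type.
Proof.
move=> cf sf; apply: lindelof_surjective_image (fun p : Z * Y => (f p.1, p.2)) _ _.
  move=> [z y] A [[B C] /= [nB nC] BC].
  exists (f @^-1` B, C) => [|[z' y'] /= [Bz' Cy']]; first by split => //; exact: cf.
  exact: (BC (f z', y')).
by move=> [x y]; have [z <-] := sf x; exists (z, y).
Qed.

Lemma second_countable_lindelof (T : topologicalType) :
  @second_countable T -> lindelof T.
Proof.
move=> [B cB [_ Bnbhs]] Ix U oU cU.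
have /choice[sel selP] : forall b, exists o : option Ix, forall i,
    b `<=` U i -> exists2 j, o = Some j & b `<=` U j.
  move=> b; have [[i bU]|nU] := pselect (exists i, b `<=` U i).
    by exists (Some i) => _ _; exists i.
  by exists None => i bU; exfalso; apply: nU; exists i.
exists (\bigcup_(b in B) [set i | sel b = Some i]); split.
  apply: bigcup_countable cB _ => b _; apply: finite_set_countable.
  case: (sel b) => [i|]; last by apply: (@sub_finite_set _ _ set0).
  by apply: (@sub_finite_set _ _ [set i]) => // j /= [->].
move=> x _; have [i _ Uix] := cU x I.
have [b [Bb bx] bU] := Bnbhs x (U i) (open_nbhs_nbhs (conj (oU i) Uix)).
have [j sj bUj] := selP b i bU.
by exists j; [exists b | exact: bUj].
Qed.

Lemma compact_cover_compact (T : topologicalType) (A : set T) :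
  compact A -> cover_compact A.
Proof.
have [[t _]|nT] := pselect (exists t : T, True); last first.
  by move=> _ I D f _ _; exists fset0 => // x; exfalso; apply: nT; exists x.
pose pT := HB.pack_for ptopologicalType T (isPointed.Build T t).
by rewrite -[@cover_compact T]/(@cover_compact pT) -compact_cover.
Qed.

Lemma countable_sub_range {T : Type} {J : set T} (t0 : T) :
  countable J -> exists e : nat -> T, J `<=` range e.
Proof.
move=> /ocard_geP [s]; exists (fun n => odflt t0 (s n)) => t Jt.
have [n _ E] := 'surj_s (ltac:(by exists t) : (Some @` J) (Some t)).
by exists n => //; rewrite /= E.
Qed.

Lemma compact_closure_nbhs_sub (K : topologicalType) (p : K) (O : set K) :
  compact [set: K] -> hausdorff_space K -> open O -> O p ->
  exists V, [/\ open V, V p & closure V `<=` O].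
Proof.
move=> cK hK oO Op.
have [A nA AO] :=
  compact_regular hK cK (filterT : nbhs p setT) (open_nbhs_nbhs (conj oO Op)).
exists A°; split; [exact: open_interior | exact: nA |].
by apply: subset_trans AO; apply: closureS; exact: interior_subset.
Qed.

Lemma lindelof_closure_cover (Z K : topologicalType) (g : Z -> K) (O : set K) :
  continuous g -> lindelof Z -> compact [set: K] -> hausdorff_space K ->
  open O -> (forall z, O (g z)) ->
  exists V : nat -> set K,
    (forall j, closure (V j) `<=` O) /\ (forall z, exists j, V j (g z)).
Proof.
move=> cg lZ cK hK oO Og.
have [[z0 _]|nZ] := pselect (exists z : Z, True); last first.
  exists (fun=> set0); split=> [j|z]; first by rewrite closure0.
  by exfalso; apply: nZ; exists z.
have /choice[V hV] z : exists V, [/\ open V, V (g z) & closure V `<=` O].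
  exact: compact_closure_nbhs_sub.
have oV z : open (g @^-1` V z).
  by apply: open_comp; [move=> x _; exact: cg | case: (hV z)].
have [|J [cJ JV]] := lZ Z _ oV.
  by move=> z _; exists z => //; case: (hV z).
have [e Je] := countable_sub_range z0 cJ.
exists (V \o e); split=> [j|z]; first by case: (hV (e j)).
by have [z' /Je [j _ <-] Vz] := JV z I; exists j.
Qed.

Fixpoint closure_cumul {T : topologicalType} (V : nat -> set T) (j : nat) : set T :=
  if j is j'.+1 then closure_cumul V j' `|` closure (V j) else closure (V 0%N).

Section ClosureCumul.
Variables (T : topologicalType) (V : nat -> set T).

Lemma closed_closure_cumul j : closed (closure_cumul V j).
Proof. by elim: j => [|j IH] /=; [|apply: closedU => //]; exact: closed_closure. Qed.

Lemma closure_cumul_sub (O : set T) j :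
  (forall i, closure (V i) `<=` O) -> closure_cumul V j `<=` O.
Proof. by move=> VO; elim: j => [|j IH] //= p [/IH|/VO]. Qed.

Lemma closure_cumul_mono : {homo closure_cumul V : i j / (i <= j)%N >-> i `<=` j}.
Proof. by move=> i j /subnK <-; elim: (j - i)%N => [|k IH] //= p /IH; left. Qed.

Lemma sub_closure_cumul j : V j `<=` closure_cumul V j.
Proof. by case: j => [|j] p /subset_closure //; right. Qed.

End ClosureCumul.

Lemma Gdelta_exhaustion (Z K : topologicalType) (g : Z -> K) (G : nat -> set K) :
  continuous g -> lindelof Z -> compact [set: K] -> hausdorff_space K ->
  (forall n, open (G n)) -> range g = \bigcap_n G n ->
  exists W : nat -> nat -> set K,
    [/\ forall n j, closed (W n j), forall n j, W n j `<=` G n,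
        forall n, {homo W n : i j / (i <= j)%N >-> i `<=` j}
      & forall n z, exists j, W n j (g z)].
Proof.
move=> cg lZ cK hK oG rg.
have Gg n z : G n (g z).
  have : range g (g z) by exists z.
  by rewrite rg; apply.
have /choice[V hV] n := lindelof_closure_cover cg lZ cK hK (oG n) (Gg n).
exists (fun n => closure_cumul (V n)); split => [n j|n j|n|n z].
- exact: closed_closure_cumul.
- by apply: closure_cumul_sub; case: (hV n).
- exact: closure_cumul_mono.
- by have [j Vj] := (hV n).2 z; exists j; exact: sub_closure_cumul.
Qed.

Lemma bigcap_subset_open_finite (K : topologicalType) (F : nat -> set K) (O : set K) :
  compact [set: K] -> (forall m, closed (F m)) -> open O -> \bigcap_m F m `<=` O ->
  exists n, \bigcap_(m in `I_n) F m `<=` O.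
Proof.
move=> cK cF oO FO.
have cOc : compact (~` O) by apply: (subclosed_compact _ cK) => //; exact: open_closedC.
have cov : ~` O `<=` \bigcup_(m in [set: nat]) ~` F m.
  move=> q Oq; apply: contrapT => nq; apply: Oq; apply: FO => m _.
  by apply: contrapT => Fq; apply: nq; exists m.
have [D _ DF] := compact_cover_compact cOc (fun m _ => closed_openC (cF m)) cov.
exists (\max_(m <- D) m).+1 => q Fq; apply: contrapT => Oq.
have [m Dm] := DF q Oq; apply; apply: Fq; rewrite /= ltnS.
exact: leq_bigmax_seq.
Qed.

Lemma nested_compact_nonempty (T : ptopologicalType) (E : nat -> set T) :
  hausdorff_space T -> (forall n, compact (E n)) -> (forall n, E n.+1 `<=` E n) ->
  (forall n, E n !=set0) -> \bigcap_n E n !=set0.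
Proof.
move=> hT cE E_decr E0.
have E_mono i j : (i <= j)%N -> E j `<=` E i.
  by move=> /subnK <-; elim: (j - i)%N => // k IH p /E_decr /IH.
have := cE 0%N; rewrite compact_In0 => /(_ nat setT E); apply.
  exists E => [i _|i _]; first exact: compact_closed.
  by apply/seteqP; split=> [p Ep|p [] //]; split => //; exact: E_mono Ep.
move=> D _; have [p Ep] := E0 (\max_(i <- D) i).
by exists p => i /= Di; apply: E_mono Ep; exact: leq_bigmax_seq.
Qed.

Lemma embedding_box (Z Y K : topologicalType) (g : Z -> K) (U : set (Z * Y)) z y :
  embedding g -> open U -> U (z, y) ->
  exists V O, [/\ open V, V (g z), nbhs y O &
                  forall z' y', V (g z') -> O y' -> U (z', y')].
Proof.
move=> [_ [ig eg]] oU Uzy.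
have [[A B] /= [nA nB] AB] : nbhs (z, y) U by exact: open_nbhs_nbhs.
move: nA; rewrite nbhsE => -[A' [oA' A'z] A'A].
have [V [oV EV]] := eg A' oA'.
have gA' z' : V (g z') -> A' z'.
  move=> Vz'; have : (g @` A') (g z') by rewrite EV; split => //; exists z'.
  by case=> a A'a /ig <-.
exists V, B; split => // [|z' y' /gA' A'z' By'].
  have : (g @` A') (g z) by exists z.
  by rewrite EV => -[].
exact: (AB (z', y')) (conj (A'A _ A'z') By').
Qed.

Lemma embedding_compact_tube (Z Y K : topologicalType) (g : Z -> K)
    (I : Type) (U : I -> set (Z * Y)) (i0 : I) (C : set K) y :
  embedding g -> (forall i, open (U i)) -> (forall z, exists i, U i (z, y)) ->
  compact C -> C `<=` range g ->
  exists V O (F : set I), [/\ open V, C `<=` V, nbhs y O, finite_set F &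
    forall z y', V (g z) -> O y' -> exists2 i, F i & U i (z, y')].
Proof.
move=> eg oU cU cC Cg.
have /choice[box hbox] p : exists b : set K * set Y * I, C p ->
    [/\ open b.1.1, b.1.1 p, nbhs y b.1.2 &
        forall z y', b.1.1 (g z) -> b.1.2 y' -> U b.2 (z, y')].
  have [Cp|nCp] := pselect (C p); last by exists (setT, setT, i0).
  have [z _ <-] := Cg p Cp; have [i Ui] := cU z.
  have [V [Ob [oV Vz nOb VOb]]] := embedding_box eg (oU i) Ui.
  by exists (V, Ob, i).
have [D DC CD] : finite_subset_cover C (fun p => (box p).1.1) C.
  apply: compact_cover_compact => // p Cp; first by case: (hbox p Cp).
  by exists p => //; case: (hbox p Cp).
have {}DC p : p \in D -> C p by move=> /DC /set_mem.
exists (\bigcup_(p in [set` D]) (box p).1.1), (\bigcap_(p in [set` D]) (box p).1.2),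
  ((fun p => (box p).2) @` [set` D]); split => //.
- by apply: bigcup_open => p /DC Cp; case: (hbox p Cp).
- by apply: filter_bigI => p /DC Cp; case: (hbox p Cp).
- exact/finite_image/finite_fset.
move=> z y' [p Dp Vp] Oy'; exists (box p).2; first by exists p.
by case: (hbox p (DC p Dp)) => _ _ _; apply => //; exact: Oy'.
Qed.

Definition locally_constant (M : topologicalType) (T : Type) (f : M -> T) :=
  forall x, \forall x' \near x, f x' = f x.

Definition dominating (M : Type) (d : nat -> M -> nat) :=
  forall k : nat -> nat, exists x, forall m, (k m <= d m x)%N.

Section LindelofProductDominated.
Variables (M Z Y K : topologicalType) (d : nat -> M -> nat) (g : Z -> K).
Variables (G : nat -> set K) (W : nat -> nat -> set K).
Hypothesis d_loc : forall m, locally_constant (d m).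
Hypothesis d_dom : dominating d.
Hypotheses (cK : compact [set: K]) (eg : embedding g) (rg : range g = \bigcap_n G n).
Hypothesis W_closed : forall n j, closed (W n j).
Hypothesis W_sub : forall n j, W n j `<=` G n.
Hypothesis W_mono : forall n, {homo W n : i j / (i <= j)%N >-> i `<=` j}.
Hypothesis W_exhaust : forall n z, exists j, W n j (g z).

Let core x := \bigcap_m W m (d m x).

Let core_compact x : compact (core x).
Proof. by apply: (subclosed_compact _ cK) => //; apply: closed_bigI => m _. Qed.

Let core_sub_range x : core x `<=` range g.
Proof. by rewrite rg => p Cp m _; apply: (W_sub (Cp m I)). Qed.

Lemma local_finite_subcover (I : Type) (U : I -> set (Z * Y)) (i0 : I)
    (x : M) (y : Y) :
  (forall i, open (U i)) -> (forall z y, exists i, U i (z, y)) ->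
  exists N O F, [/\ nbhs x N, nbhs y O, finite_set F &
    forall x' y' z, N x' -> O y' -> (forall m, W m (d m x') (g z)) ->
      exists2 i, F i & U i (z, y')].
Proof.
move=> oU cU.
have [V [Ob [F [oV CV nOb fF VOF]]]] :=
  embedding_compact_tube i0 eg oU (cU^~ y) (@core_compact x) (@core_sub_range x).
have [n BV] := bigcap_subset_open_finite cK (fun m => @W_closed m (d m x)) oV CV.
exists [set x' | forall m, (m < n)%N -> d m x' = d m x], Ob, F; split => //.
  have : \forall x' \near x, forall i : 'I_n, d i x' = d i x.
    by apply: filter_forall => i; exact: d_loc.
  by apply: filterS => x' dx' m mn; exact: dx' (Ordinal mn).
move=> x' y' z Nx' Oy' Wz; apply: VOF Oy'; apply: BV => m /= mn.
by rewrite -(Nx' m mn); exact: Wz.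
Qed.

Lemma lindelof_prod_dominated : lindelof (M * Y)%type -> lindelof (Z * Y)%type.
Proof.
move=> lMY Ix U oU cU.
have [[[z0 y0] _]|nZY] := pselect (exists p : Z * Y, True); last first.
  by exists set0; split => // p; exfalso; apply: nZY; exists p.
have [i0 _ _] := cU (z0, y0) I.
have /choice[box hbox] (w : M * Y) : exists b : set M * set Y * set Ix,
    [/\ nbhs w.1 b.1.1, nbhs w.2 b.1.2, finite_set b.2 &
      forall x' y' z, b.1.1 x' -> b.1.2 y' -> (forall m, W m (d m x') (g z)) ->
        exists2 i, b.2 i & U i (z, y')].
  have [|N [Ob [F hNOF]]] := local_finite_subcover i0 w.1 w.2 oU.
    by move=> z y; have [i _ Ui] := cU (z, y) I; exists i.
  by exists (N, Ob, F).
have [|J [cJ JU]] :=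
    lMY _ (fun w => ((box w).1.1 `*` (box w).1.2)°) (fun=> open_interior _).
  move=> w _; exists w => //; case: (hbox w) => nN nO _ _.
  by exists ((box w).1.1, (box w).1.2).
exists (\bigcup_(w in J) (box w).2); split.
  by apply: bigcup_countable cJ _ => w _; apply: finite_set_countable; case: (hbox w).
move=> [z y] _.
have /choice[k hk] m : exists j, W m j (g z) := W_exhaust m z.
have [x dx] := d_dom k.
have [w Jw /interior_subset [Nx Oy]] := JU (x, y) I.
case: (hbox w) => _ _ _ /(_ x y z Nx Oy (fun m => W_mono (dx m) (hk m))) [i Fi Ui].
by exists i => //; exists w.
Qed.

End LindelofProductDominated.

Lemma lindelof_prod_cech_complete (M Z Y : topologicalType) (d : nat -> M -> nat) :
  (forall m, locally_constant (d m)) -> dominating d ->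
  lindelof (M * Y)%type -> lindelof Z -> cech_complete Z -> lindelof (Z * Y)%type.
Proof.
move=> d_loc d_dom lMY lZ [_ [K [g [cK [hK [eg [_ [G oG rg]]]]]]]].
have [W [Wc Ws Wm We]] := Gdelta_exhaustion eg.1 lZ cK hK oG rg.
exact: (lindelof_prod_dominated d_loc d_dom cK eg rg Wc Ws Wm We).
Qed.

(** * The irrationals *)

Local Notation RR := Rdefinitions.R.
Local Open Scope ring_scope.

Definition irr_val (x : irrationals) : RR := set_val x.

Definition to_irr (r : RR) (h : irrational r) : irrationals := exist _ r (mem_set h).

Lemma to_irrK r h : irr_val (@to_irr r h) = r.
Proof. by rewrite /irr_val set_valE. Qed.

Lemma irr_val_continuous : continuous irr_val.
Proof. exact: initial_continuous. Qed.

Lemma irr_val_inj : injective irr_val.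
Proof. by move=> x y; rewrite /irr_val !set_valE; exact: val_inj. Qed.

Lemma irrational_irr_val (x : irrationals) : irrational (irr_val x).
Proof. by case: x => r hr; rewrite /irr_val set_valE; exact/set_mem. Qed.

Lemma open_irrationalsP (U : set irrationals) :
  open U -> exists2 A : set RR, open A & irr_val @^-1` A = U.
Proof.
by move=> oU; have [A oA E] : wopen (set_val : irrationals -> _) U := oU; exists A.
Qed.

Lemma irrationals_hausdorff : hausdorff_space irrationals.
Proof.
move=> p q cl; apply: irr_val_inj; apply: Rhausdorff => A B nA nB.
have [r [Ar Br]] := cl _ _ (irr_val_continuous nA) (irr_val_continuous nB).
by exists (irr_val r).
Qed.

Lemma irrationals_tychonoff : tychonoff_space irrationals.
Proof.
split; last exact: irrationals_hausdorff.
exact: (@uniform_completely_regular RR (set_type (@irrational RR))).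
Qed.

Lemma irrationals_second_countable : @second_countable irrationals.
Proof.
exists [set irr_val @^-1` [set` `]ratr ab.1, ratr ab.2[] | ab in [set: rat * rat]].
  exact: sub_countable (card_image_le _ _) (countableP _).
split=> [_ [ab _ <-]|x A nA].
  by apply: open_comp; [move=> x _; exact: irr_val_continuous | exact: interval_open].
move: nA; rewrite nbhsE => -[U [oU Ux] UA].
have [B oB BU] := open_irrationalsP oU.
have /nbhs_ballP [e e0 eB] : nbhs (irr_val x) B.
  by apply: open_nbhs_nbhs; split => //; rewrite -BU in Ux.
have [a] := @rat_in_itvoo RR (irr_val x - e) (irr_val x) ltac:(by rewrite ltrBlDr ltrDl).
rewrite in_itv /= => /andP[a1 a2].
have [b] := @rat_in_itvoo RR (irr_val x) (irr_val x + e) ltac:(by rewrite ltrDl).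
rewrite in_itv /= => /andP[b1 b2].
exists (irr_val @^-1` [set` `]ratr a, ratr b[]).
  by split; [exists (a, b) | rewrite /= in_itv /= a2 b1].
move=> x' /=; rewrite in_itv /= => /andP[x'a x'b]; apply: UA; rewrite -BU.
by apply: eB; rewrite /ball /= ltr_distlC; apply/andP; split; lra.
Qed.

Local Notation RR_opc := (one_point_compactification RR).

Lemma RR_opc_hausdorff : hausdorff_space RR_opc.
Proof.
exact: one_point_compactification_hausdorff (@locally_compactR RR) (@Rhausdorff RR).
Qed.

Definition irr_embed (x : irrationals) : RR_opc := Some (irr_val x).

Lemma irr_embed_embedding : embedding irr_embed.
Proof.
split; [|split].
- by move=> x A nA; exact: (@irr_val_continuous x (Some @^-1` A) nA).
- by move=> x y [/irr_val_inj].
move=> U oU; have [B oB <-] := open_irrationalsP oU.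
exists (Some @` B); split; first exact: one_point_compactification_open_some.
apply/seteqP; split=> [_ [x Bx <-]|_ [[x _ <-] [r Br [E]]]].
  by split; [exists x | exists (irr_val x)].
by exists x => //; rewrite /= -E.
Qed.

Lemma RR_opc_open_nonempty (O : set RR_opc) : open O -> O !=set0 ->
  exists2 B : set RR, open B /\ B !=set0 & Some @` B `<=` O.
Proof.
move=> oO [p Op]; have := oO p Op; case: p Op => [r|] _ /=.
  move=> nr; have : nbhs r (Some @^-1` O) := nr.
  rewrite nbhsE => -[B [oB Br] BO].
  by exists B; [split => //; exists r | move=> _ [b Bb <-]; exact: BO].
move=> [C [cC clC] CO].
exists (~` C); last by move=> _ [b Cb <-]; apply: CO; left; exists b.
split; first exact: closed_openC.
have [M [_ hM]] := @compact_bounded RR RR^o C cC.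
exists (M + 2) => /(hM (M + 1) ltac:(lra)) /=.
by have := ler_norm (M + 2); lra.
Qed.

Lemma irr_embed_dense : dense (range irr_embed).
Proof.
move=> O O0 oO; have [B [oB B0] BO] := RR_opc_open_nonempty oO O0.
have [s [Bs Is]] : B `&` irrational !=set0.
  by have [F oF ->] := @irrational_Gdelta RR; apply: (Baire oF).
exists (irr_embed (to_irr Is)).
by split; [apply: BO; exists s; rewrite ?to_irrK | exists (to_irr Is)].
Qed.

Lemma irr_embed_Gdelta : Gdelta (range irr_embed).
Proof.
have cl1 (p : RR_opc) : closed [set p].
  exact/accessible_closed_set1/hausdorff_accessible/RR_opc_hausdorff.
exists (fun n => if n is n'.+1 then ~` [set Some (ratr (odflt 0 (choice.unpickle n')))]
                 else ~` [set None]).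
  by case=> [|n]; apply: closed_openC.
apply/seteqP; split=> [_ [x _ <-] [|n] _ //= [] E|[r|] h]; last by case: (h 0%N I).
  have : rational (irr_val x) by rewrite E; exists (odflt 0 (choice.unpickle n)).
  exact: irrational_irr_val.
have Ir : irrational r.
  by move=> [q _ E]; apply: (h (choice.pickle q).+1 I); rewrite /= choice.pickleK E.
by exists (to_irr Ir) => //; rewrite /irr_embed to_irrK.
Qed.

Lemma irrationals_K_Lusin : K_Lusin irrationals.
Proof.
exists irrationals, id; split; first exact: irrationals_tychonoff.
split; first exact/second_countable_lindelof/irrationals_second_countable.
split; last by split=> [x|]; [|split=> // x; exists x].
split; first exact: irrationals_tychonoff.
exists RR_opc, irr_embed; split; first exact: one_point_compactification_compact.
split; first exact: RR_opc_hausdorff.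
split; first exact: irr_embed_embedding.
by split; [exact: irr_embed_dense | exact: irr_embed_Gdelta].
Qed.

(** * Continued fractions *)

Section ContinuedFraction.
Variable R : realType.
Implicit Types (x y : R) (a : nat -> nat).

Definition cf_tail x : R := (x - (Num.floor x)%:~R)^-1.

Definition complete_quotient n x : R := iter n cf_tail x.

Definition partial_quotient n x : nat := `|Num.floor (complete_quotient n x)|%N.

Lemma complete_quotientS n x :
  complete_quotient n.+1 x = cf_tail (complete_quotient n x).
Proof. exact: iterS. Qed.

Lemma complete_quotientSr n x :
  complete_quotient n.+1 x = complete_quotient n (cf_tail x).
Proof. exact: iterSr. Qed.

Lemma rational_subz x (c : int) : rational (x - c%:~R) -> rational x.
Proof.
move=> [q _ E]; exists (q + c%:~R) => //.
by rewrite rmorphD /= ratr_int E subrK.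
Qed.

Lemma irrational_frac_neq0 x : irrational x -> x - (Num.floor x)%:~R != 0.
Proof.
move=> ix; apply/negP => /eqP E; apply: ix; apply: (@rational_subz _ (Num.floor x)).
by rewrite E; exists 0 => //; rewrite rmorph0.
Qed.

Lemma irrational_cf_tail x : irrational x -> irrational (cf_tail x).
Proof.
move=> ix [q _ E]; apply: ix; apply: (@rational_subz _ (Num.floor x)).
by exists q^-1 => //; rewrite fmorphV /= E /cf_tail invrK.
Qed.

Lemma irrational_complete_quotient n x :
  irrational x -> irrational (complete_quotient n x).
Proof.
by move=> ix; elim: n => // n IH; rewrite complete_quotientS; exact: irrational_cf_tail.
Qed.

Lemma floor_near_irrational x : irrational x ->
  \forall y \near x, Num.floor y = Num.floor x.
Proof.
move=> ix; have := irrational_frac_neq0 ix; set c := Num.floor x => xc.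
have /andP[cx xc1] := floor_itv x; rewrite -/c intrD in cx xc1.
have {cx}cx : c%:~R < x by rewrite lt_neqAle cx andbT eq_sym -subr_eq0.
have near_gt : \forall y \near x, c%:~R < y.
  apply/nbhs_ballP; exists (x - c%:~R); first by rewrite /= subr_gt0.
  by move=> y; rewrite /ball /= ltr_distlC => /andP[+ _]; lra.
have near_lt : \forall y \near x, y < c%:~R + 1.
  apply/nbhs_ballP; exists (c%:~R + 1 - x); first by rewrite /= subr_gt0.
  by move=> y; rewrite /ball /= ltr_distlC => /andP[_ +]; lra.
apply: filterS (filterI near_gt near_lt) => y [cy yc1].
by apply: floor_def; rewrite intrD (ltW cy) yc1.
Qed.

Lemma cf_tail_continuous x : irrational x -> {for x, continuous cf_tail}.
Proof.
move=> ix; set c := Num.floor x.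
have tailE : {near x, (fun y => (y - c%:~R)^-1) =1 cf_tail}.
  by apply: filterS (floor_near_irrational ix) => y E; rewrite /cf_tail E.
apply: cvg_trans (near_eq_cvg tailE) _.
apply: cvgV; first exact: irrational_frac_neq0.
by apply: cvgB; [exact: cvg_id | exact: cvg_cst].
Qed.

Lemma complete_quotient_continuous n x :
  irrational x -> {for x, continuous (complete_quotient n)}.
Proof.
move=> ix; elim: n => [|n IH]; first exact: cvg_id.
have -> : complete_quotient n.+1 = cf_tail \o complete_quotient n.
  by apply: funext => y; rewrite complete_quotientS.
apply: continuous_comp IH _.
exact/cf_tail_continuous/irrational_complete_quotient.
Qed.

(* Euclid's algorithm: on a rational p / q, [cf_tail] either lowers the
   denominator q or, when the fractional part vanishes, returns the junk value
   [0^-1 = 0]. *)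
Lemma complete_quotient_gt1_irrational x :
  (forall n, 1 < complete_quotient n x) -> irrational x.
Proof.
suff descent N : forall (p : int) (q : nat) y, (0 < q <= N)%N ->
    y = p%:~R / q%:R -> ~ (forall n, 1 < complete_quotient n y).
  move=> gt1 [t _ xt]; have dpos := denq_gt0 t.
  apply: (descent `|denq t|%N (numq t) `|denq t|%N x) => //.
    by rewrite absz_gt0 gt_eqF // leqnn.
  by rewrite -xt natr_absz gtr0_norm.
elim: N => [|N IH] p q y /andP[q0 qN] yE gt1; first lia.
set c := Num.floor y.
have tail_gt1 : 1 < cf_tail y by have := gt1 1%N.
have frac : y - c%:~R = (cf_tail y)^-1 by rewrite /cf_tail invrK.
have [t0 t1] : 0 < (cf_tail y)^-1 /\ (cf_tail y)^-1 < 1.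
  have tail_gt0 : 0 < cf_tail y by lra.
  by rewrite invr_gt0 invf_lt1.
set r : int := p - c * q%:Z.
have qR : (0 : R) < q%:R by rewrite ltr0n.
have rq : r%:~R / q%:R = (cf_tail y)^-1.
  by rewrite -frac yE /r rmorphB rmorphM /= -pmulrn; field; rewrite gt_eqF.
have r0 : 0 < r.
  rewrite -(ltr0z R); have : 0 < r%:~R / (q%:R : R) by rewrite rq.
  by rewrite pmulr_lgt0 // invr_gt0.
have rltq : r < q%:Z.
  rewrite -(ltr_int R) -pmulrn; have : r%:~R / (q%:R : R) < 1 by rewrite rq.
  by rewrite ltr_pdivrMr // mul1r.
apply: (IH q%:Z `|r|%N (cf_tail y)); first by apply/andP; split; lia.
  by rewrite -[cf_tail y]invrK -rq invf_div -pmulrn natr_absz gtr0_norm.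
by move=> n; rewrite -complete_quotientSr.
Qed.

Definition cf_step (c : nat) y : R := c%:R + y^-1.

Fixpoint cf_eval n a y : R :=
  if n is n'.+1 then cf_step (a 0%N) (cf_eval n' (fun i => a i.+1) y) else y.

Lemma cf_evalSr n a y : cf_eval n.+1 a y = cf_eval n a (cf_step (a n) y).
Proof.
elim: n a y => [|n IH] a y; first by [].
exact (congr1 (cf_step (a 0%N)) (IH (fun i => a i.+1) y)).
Qed.

Lemma cf_step_itv (c b : nat) y : (2 <= b)%N -> b%:R <= y <= b%:R + 1 ->
  c%:R <= cf_step c y <= c%:R + 1.
Proof.
rewrite -(ler_nat R) => b2 /andP[b_le_y _].
have y0 : 0 < y by lra.
have [y'0 y'1] : 0 <= y^-1 /\ y^-1 <= 1 by rewrite invr_ge0 invf_le1 //; split; lra.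
by rewrite /cf_step; apply/andP; split; lra.
Qed.

Lemma cf_eval_itv n a y : (forall i, 2 <= a i)%N ->
  (a n)%:R <= y <= (a n)%:R + 1 -> (a 0%N)%:R <= cf_eval n a y <= (a 0%N)%:R + 1.
Proof.
elim: n a y => // n IH a y a2 hy /=.
by apply: (@cf_step_itv _ (a 1%N)) => //; exact: (IH (fun i => a i.+1)).
Qed.

Lemma cf_tail_step (c : nat) y : 1 < y -> cf_tail (cf_step c y) = y.
Proof.
move=> y1; have y0 : 0 < y by lra.
have [y'0 y'1] : 0 < y^-1 /\ y^-1 < 1 by rewrite invr_gt0 invf_lt1.
rewrite /cf_tail (@floor_def _ _ c%:Z); last first.
  by rewrite intrD -pmulrn /cf_step; apply/andP; split; lra.
by rewrite -pmulrn /cf_step addrAC subrr add0r invrK.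
Qed.

Lemma complete_quotient_cf_eval n a y : (forall i, 2 <= a i)%N ->
  (a n)%:R <= y <= (a n)%:R + 1 -> complete_quotient n (cf_eval n a y) = y.
Proof.
elim: n a y => // n IH a y a2 hy.
rewrite complete_quotientSr /= cf_tail_step; first exact: (IH (fun i => a i.+1)).
have := @cf_eval_itv n (fun i => a i.+1) y (fun i => a2 i.+1) hy.
by have := a2 1%N; rewrite -(ler_nat R); lra.
Qed.

Lemma cf_eval_continuous n a y : (forall i, 2 <= a i)%N -> 0 < y ->
  {for y, continuous (cf_eval n a)} /\ 0 < cf_eval n a y.
Proof.
elim: n a y => [|n IH] a y a2 y0; first by split => //; exact: cvg_id.
have [cont pos] := IH (fun i => a i.+1) y (fun i => a2 i.+1) y0.
have -> : cf_eval n.+1 a = cf_step (a 0%N) \o cf_eval n (fun i => a i.+1) by [].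
split; last by rewrite /= /cf_step; apply: ltr_wpDl; rewrite ?invr_gt0.
apply: continuous_comp; first exact: cont.
apply: (@cvgD _ R^o); first exact: cvg_cst.
by apply: cvgV; [rewrite gt_eqF | exact: cvg_id].
Qed.

Definition cf_cylinder a n : set R :=
  cf_eval n a @` [set y | (a n)%:R <= y <= (a n)%:R + 1].

Lemma cf_cylinder_compact a n : (forall i, 2 <= a i)%N -> compact (cf_cylinder a n).
Proof.
move=> a2; rewrite /cf_cylinder.
have -> : [set y : R | (a n)%:R <= y <= (a n)%:R + 1] = [set` `[(a n)%:R, (a n)%:R + 1]].
  by apply/seteqP; split => y; rewrite /= in_itv.
apply: continuous_compact; last exact: segment_compact.
apply: continuous_in_subspaceT => y /set_mem; rewrite /= in_itv /= => hy.
have y0 : 0 < y by have := a2 n; rewrite -(ler_nat R); lra.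
by case: (cf_eval_continuous n a2 y0).
Qed.

Lemma cf_cylinderS a n : (forall i, 2 <= a i)%N ->
  cf_cylinder a n.+1 `<=` cf_cylinder a n.
Proof.
move=> a2 _ [y hy <-]; exists (cf_step (a n) y); last by rewrite cf_evalSr.
exact: cf_step_itv (a2 n.+1) hy.
Qed.

Lemma exists_complete_quotients a : (forall i, 2 <= a i)%N ->
  exists x, forall n, (a n)%:R <= complete_quotient n x <= (a n)%:R + 1.
Proof.
move=> a2; have [|x cyl_x] := nested_compact_nonempty (@Rhausdorff R)
  (fun n => cf_cylinder_compact (n := n) a2) (fun n => cf_cylinderS (n := n) a2).
  move=> n; exists (cf_eval n a (a n)%:R), (a n)%:R => //.
  by rewrite /= lexx /=; lra.
by exists x => n; have [y hy <-] := cyl_x n I; rewrite complete_quotient_cf_eval.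
Qed.

End ContinuedFraction.

Definition irr_digit (m : nat) (x : irrationals) : nat := partial_quotient m (irr_val x).

Lemma irr_digit_locally_constant m : locally_constant (irr_digit m).
Proof.
move=> x; have ix := @irrational_irr_val x.
have near_x : \forall x' \near x, Num.floor (complete_quotient m (irr_val x')) =
                                   Num.floor (complete_quotient m (irr_val x)).
  exact: irr_val_continuous (complete_quotient_continuous ix
    (floor_near_irrational (irrational_complete_quotient (n := m) ix))).
by apply: filterS near_x => x' E; rewrite /irr_digit /partial_quotient E.
Qed.

Lemma irr_digit_dominating : dominating irr_digit.
Proof.
move=> k; pose a n := (k n + 2)%N.
have a2 i : (2 <= a i)%N by rewrite leq_addl.
have [r hr] := exists_complete_quotients RR a2.
have ir : irrational r.
  apply: complete_quotient_gt1_irrational => n.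
  by have := hr n; have := a2 n; rewrite -(ler_nat RR); lra.
exists (to_irr ir) => m; rewrite /irr_digit /partial_quotient to_irrK.
have /andP[am _] := hr m.
have : ((a m)%:Z <= Num.floor (complete_quotient m r))%R by rewrite floor_ge_int -pmulrn.
by rewrite /a; move: (Num.floor _) => f; lia.
Qed.

Theorem mainTheorem8 :
  (~ exists Y : topologicalType, michael_space Y) <->
  (forall X : topologicalType, tychonoff_space X -> K_Lusin X -> productively_lindelof X).
Proof.
split=> [noMichael X _ [Z [f [_ [lZ [cZ [cf [_ sf]]]]]]] Y tY lY|PL [Y [tY [lY nYP]]]].
  have lPY : lindelof (irrationals * Y)%type.
    apply: lindelof_prodC; apply: contrapT => nYP.
    by apply: noMichael; exists Y.
  apply: lindelof_prod_image cf sf _.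
  exact: lindelof_prod_cech_complete
    irr_digit_locally_constant irr_digit_dominating lPY lZ cZ.
apply: nYP; apply: lindelof_prodC.
exact: PL _ irrationals_tychonoff irrationals_K_Lusin Y tY lY.
Qed.
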